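(* Let $\star$ be a semistar operation on an integral domain $D$. Then $D^{[\star]}$ is $t$-linked to $(D,\star)$. If moreover $(D:_K D^\star)\ne(0)$, then the complete integral closure $\widetilde D$ of $D$ is $t$-linked to $(D,\star)$. In particular, the complete integral closure $\widetilde D$ of $D$ is always $t$-linked to $D$.
   Context: Let $D$ be an integral domain with quotient field $K$. $\overline{\mathbf F}(D)$ denotes the set of all nonzero $D$-submodules of $K$ and $\mathbf f(D)$ the set of nonzero finitely generated $D$-submodules of $K$. A semistar operation on $D$ is a map $\star:\overline{\mathbf F}(D)\to\overline{\mathbf F}(D)$, $E\mapsto E^\star$, such that for all $0\ne x\in K$ and $E,F\in\overline{\mathbf F}(D)$: (1) $(xE)^\star=xE^\star$; (2) $E\subseteq F\Rightarrow E^\star\subseteq F^\star$; (3) $E\subseteq E^\star$ and $(E^\star)^\star=E^\star$. $\star_f$ is defined by $E^{\star_f}=\bigcup\{F^\star:F\in\mathbf f(D),F\subseteq E\}$. $D^{[\star]}:=\bigcup\{(H^\star:_KH^\star): H\in\mathbf f(D)\}$ (an overring of $D$). The complete integral closure of $D$ is $\widetilde D=\bigcup\{(E:_KE): E$ a nonzero fractional ideal of $D\}$. For an overring $T$ of $D$ (a ring with $D\subseteq T\subseteq K$), $v_T$ is the semistar operation $E\mapsto (T:_K(T:_KE))$ on $T$ and $t_T:=(v_T)_f$. If $\star'$ is a semistar operation on $T$, $T$ is $(\star,\star')$-linked to $D$ if for every nonzero finitely generated ideal $F\subseteq D$ with $F^\star=D^\star$ one has $(FT)^{\star'}=T^{\star'}$.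 $T$ is $t$-linked to $(D,\star)$ if it is $(\star,t_T)$-linked to $D$, and $t$-linked to $D$ if it is $(t_D,t_T)$-linked to $D$. *)

From HB Require Import structures.
From mathcomp Require Import all_boot all_order all_algebra.
From mathcomp Require Import boolp classical_sets.

Set Implicit Arguments.
Unset Strict Implicit.
Unset Printing Implicit Defensive.
Import GRing.Theory.
Local Open Scope ring_scope.
Local Open Scope classical_set_scope.

(* Sets are subsets of a field K (the quotient field of D).  The integral
   domain D is realized as a subring D of K whose quotient field is K. *)
Section SemistarDefs.
Variable K : fieldType.
Implicit Types (D T A B E F : set K).

Definition is_subring D :=
  [/\ D 1, (forall x y, D x -> D y -> D (x - y)) &
      (forall x y, D x -> D y -> D (x * y))].

Definition domain_with_qf D :=
  is_subring D /\ forall x : K, exists a b, [/\ D a, D b, b != 0 & x = a / b].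

Definition is_Dmodule D E :=
  [/\ E 0, (forall x y, E x -> E y -> E (x + y)) &
      (forall d x, D d -> E x -> E (d * x))].

Definition nonzero_set E := exists x, E x /\ x != 0.

Definition Fbar D E := is_Dmodule D E /\ nonzero_set E.

Fixpoint span D (s : seq K) : set K :=
  match s with
  | [::] => [set 0]
  | a :: s' => fun x => exists d y, [/\ D d, span D s' y & x = d * a + y]
  end.

Definition fD D E := Fbar D E /\ exists s, E = span D s.

Definition scale (x : K) E : set K := fun y => exists e, E e /\ y = x * e.

Definition semistar D (star : set K -> set K) :=
  [/\ (forall E, Fbar D E -> Fbar D (star E)),
      (forall x E, x != 0 -> Fbar D E -> star (scale x E) = scale x (star E)),
      (forall E F, Fbar D E -> Fbar D F -> E `<=` F -> star E `<=` star F) &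
      (forall E, Fbar D E -> E `<=` star E /\ star (star E) = star E)].

Definition finite_type D (star : set K -> set K) E : set K :=
  fun x => exists F, [/\ fD D F, F `<=` E & star F x].

Definition colon E F : set K := fun x => forall f, F f -> E (x * f).

Definition Dbracket D (star : set K -> set K) : set K :=
  fun x => exists H, fD D H /\ colon (star H) (star H) x.

Definition frac_ideal D E :=
  is_Dmodule D E /\ exists d, [/\ D d, d != 0 & scale d E `<=` D].

Definition cic D : set K :=
  fun x => exists E, [/\ frac_ideal D E, nonzero_set E & colon E E x].

Definition vop T E : set K := colon T (colon T E).
Definition top T E : set K := finite_type T (vop T) E.

Definition prodset A B : set K :=
  fun x => exists s : seq (K * K),
    (forall p, p \in s -> A p.1 /\ B p.2) /\ x = \sum_(p <- s) p.1 * p.2.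

Definition linked D (star : set K -> set K) T (star' : set K -> set K) :=
  forall F, fD D F -> F `<=` D -> star F = star D ->
    star' (prodset F T) = star' T.

Definition t_linked_star D star T := linked D star T (top T).

Definition t_linked D T := linked D (top D) T (top T).

End SemistarDefs.

(* Let T be a ring between D and K, and F <= D finitely generated with
   (T : F) <= T.  Then (FT)^{t_T} = T^{t_T}: the T-module G spanned by the
   generators of F lies in FT and (T : G) <= (T : F) <= T, so T <= G^{v_T}.
   Both D^[⋆] and the complete integral closure are directed unions of rings
   (M : M), with M = H^⋆ for H in f(D), resp. M a nonzero fractional ideal,
   which may be replaced by M^⋆ when (D : D^⋆) <> 0.  If F^⋆ = D^⋆ and zF lies
   in such a union, then zF <= (M^⋆ : M^⋆) for a single M, so zM^⋆F <= M^⋆,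
   whence zM^⋆ <= M^⋆; this is (T : F) <= T.  The last claim is the case
   ⋆ = v_D, because F^t = D^t forces F^v = D^v. *)

From Pilot Require Import Defs.
From HB Require Import structures.
From mathcomp Require Import all_boot all_order all_algebra.
From mathcomp Require Import boolp classical_sets.

Set Implicit Arguments.
Unset Strict Implicit.
Unset Printing Implicit Defensive.
Import GRing.Theory.
Local Open Scope ring_scope.
Local Open Scope classical_set_scope.

(* [vector] also exports a [span]. *)
Local Notation span := Defs.span.

Section Submodules.
Variable K : fieldType.
Implicit Types (D R M A B E F X Y : set K) (s : seq K).

Definition is_subsemiring R :=
  [/\ R 0, R 1, (forall x y, R x -> R y -> R (x + y)) &
      (forall x y, R x -> R y -> R (x * y))].

Lemma subring_subsemiring D : is_subring D -> is_subsemiring D.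
Proof.
case=> D1 Dsub Dmul; have D0 : D 0 by rewrite -(subrr 1); apply: Dsub.
have DN x : D x -> D (- x) by move=> Dx; rewrite -sub0r; apply: Dsub.
by split=> // x y Dx Dy; rewrite -(opprK y); apply/Dsub/DN.
Qed.

Lemma subsemiring_module D R : is_subsemiring R -> D `<=` R -> is_Dmodule D R.
Proof. by case=> R0 _ Radd Rmul DR; split=> // d x /DR; apply: Rmul. Qed.

Lemma Fbar_self D : is_subsemiring D -> Fbar D D.
Proof.
move=> HD; split; first exact: subsemiring_module.
by case: HD => _ D1 _ _; exists 1; split=> //; apply: oner_neq0.
Qed.

Lemma Fbar_scale D x E : x != 0 -> Fbar D E -> Fbar D (scale x E).
Proof.
move=> x0 [[E0 Eadd Emul] [e [Ee e0]]]; split; last first.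
  by exists (x * e); split; [exists e | apply: mulf_neq0].
split; first by exists 0; rewrite mulr0.
  move=> _ _ [u [Eu ->]] [v [Ev ->]].
  by exists (u + v); rewrite mulrDr; split=> //; apply: Eadd.
by move=> d _ Dd [u [Eu ->]]; exists (d * u); rewrite mulrCA; split=> //; apply: Emul.
Qed.

Lemma span_sub D M s : is_Dmodule D M -> (forall a, a \in s -> M a) -> span D s `<=` M.
Proof.
case=> M0 Madd Mmul; elim: s => [|b s IH] Ms x /=; first by move->.
case=> d [y [Dd Sy ->]]; apply: Madd; first by apply: Mmul => //; apply: Ms; rewrite inE eqxx.
by apply: IH => // a ai; apply: Ms; rewrite inE ai orbT.
Qed.

Lemma span_module D s : is_subsemiring D -> is_Dmodule D (span D s).
Proof.
case=> D0 _ Dadd Dmul; elim: s => [|a s [S0 Sadd Smul]] /=.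
  by split=> // [x y -> ->|d x _ ->]; rewrite ?addr0 ?mulr0.
split; first by exists 0, 0; rewrite mul0r addr0.
  move=> _ _ [d [x [Dd Sx ->]]] [e [y [De Sy ->]]].
  exists (d + e), (x + y); split; [exact: Dadd | exact: Sadd |].
  by rewrite mulrDl addrACA.
move=> d _ Dd [e [y [De Sy ->]]]; exists (d * e), (d * y).
by split; [exact: Dmul | exact: Smul | rewrite mulrDr mulrA].
Qed.

Lemma mem_span D s a : is_subsemiring D -> a \in s -> span D s a.
Proof.
move=> HD; have [D0 D1 _ _] := HD.
elim: s => [|b s IH] //; rewrite inE => /orP[/eqP ->|ai].
  by exists 1, 0; split=> //; [case: (span_module s HD) | rewrite mul1r addr0].
by exists 0, a; split=> //; [apply: IH | rewrite mul0r add0r].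
Qed.

Lemma span_neq0 D s : nonzero_set (span D s) -> exists2 a, a \in s & a != 0.
Proof.
move=> [x [Sx x0]]; apply: contrapT => Hs; move: x0.
suff /= -> : [set 0] x by rewrite eqxx.
apply: span_sub Sx; first by split=> // [? ? -> ->|? ? _ ->]; rewrite ?addr0 ?mulr0.
by move=> a ai; apply: contrapT => /eqP a0; apply: Hs; exists a.
Qed.

Lemma colon_span D M s w : is_Dmodule D M ->
  (forall a, a \in s -> M (w * a)) -> colon M (span D s) w.
Proof.
case=> M0 Madd Mmul Ms f /(span_sub _ Ms); apply; split; first by rewrite mulr0.
  by move=> x y ? ?; rewrite mulrDr; apply: Madd.
by move=> d x Dd ?; rewrite mulrCA; apply: Mmul.
Qed.

Lemma fD_self D : is_subsemiring D -> fD D D.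
Proof.
move=> HD; split; first exact: Fbar_self.
exists [:: 1]; apply/seteqP; split=> x /=.
  by move=> Dx; exists x, 0; rewrite mulr1 addr0.
by case=> d [y [Dd -> ->]]; rewrite mulr1 addr0.
Qed.

Lemma colon_module D M X : is_Dmodule D M -> is_Dmodule D (colon M X).
Proof.
case=> M0 Madd Mmul; split; first by move=> f _; rewrite mul0r.
  by move=> x y cx cy f Xf; rewrite mulrDl; apply: Madd; [apply: cx | apply: cy].
by move=> d x Dd cx f Xf; rewrite -mulrA; apply: Mmul => //; apply: cx.
Qed.

Lemma colon_subsemiring D M : is_Dmodule D M -> is_subsemiring (colon M M).
Proof.
move=> HM; have [c0 cadd _] := colon_module M HM.
by split=> // [f Mf | x y cx cy f Mf]; rewrite ?mul1r // -mulrA; apply/cx/cy.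
Qed.

Lemma sub_colon_self D M : is_Dmodule D M -> D `<=` colon M M.
Proof. by case=> _ _ Mmul d Dd f; apply: Mmul. Qed.

Lemma colonS M X Y : X `<=` Y -> colon M Y `<=` colon M X.
Proof. by move=> XY x cx f /XY; apply: cx. Qed.

Lemma sub_colon_colon M X : X `<=` colon M (colon M X).
Proof. by move=> x Xx y cy; rewrite mulrC; apply: cy. Qed.

Lemma colon_colonK M X : colon M (colon M (colon M X)) = colon M X.
Proof.
apply/seteqP; split; last exact: sub_colon_colon.
exact: colonS (@sub_colon_colon M X).
Qed.

Lemma colon_scale M X x : x != 0 -> colon M (scale x X) = scale x^-1 (colon M X).
Proof.
move=> x0; apply/seteqP; split=> y.
  move=> cy; exists (x * y); split; last by rewrite mulrA mulVf ?mul1r.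
  by move=> f Xf; rewrite -mulrA mulrCA; apply: cy; exists f.
case=> e [ce ->] _ [f [Xf ->]].
by rewrite mulrACA mulVf // mul1r; apply: ce.
Qed.

Lemma prodset0 A B : prodset A B 0.
Proof. by exists [::]; rewrite big_nil. Qed.

Lemma prodsetD A B x y : prodset A B x -> prodset A B y -> prodset A B (x + y).
Proof.
case=> l1 [H1 ->] [l2 [H2 ->]]; exists (l1 ++ l2); split; last by rewrite big_cat.
by move=> p; rewrite mem_cat => /orP[/H1|/H2].
Qed.

Lemma prodset_mem A B a b : A a -> B b -> prodset A B (a * b).
Proof.
by move=> Aa Bb; exists [:: (a, b)]; rewrite big_seq1; split=> // p /[!inE] /eqP ->.
Qed.

Lemma prodset_sub A B M : M 0 -> (forall x y, M x -> M y -> M (x + y)) ->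
  (forall a b, A a -> B b -> M (a * b)) -> prodset A B `<=` M.
Proof.
move=> M0 Madd MAB _ [l [Hl ->]]; elim: l Hl => [|p l IH] Hl; first by rewrite big_nil.
rewrite big_cons; apply: Madd; first by have [] := Hl p (mem_head _ _); apply: MAB.
by apply: IH => q ql; apply: Hl; rewrite inE ql orbT.
Qed.

Lemma prodsetC A B : prodset A B = prodset B A.
Proof.
suff sub (C C' : set K) : prodset C C' `<=` prodset C' C by apply/seteqP; split; apply: sub.
apply: prodset_sub; [exact: prodset0 | exact: prodsetD |].
by move=> a b Ca C'b; rewrite mulrC; apply: prodset_mem.
Qed.

Lemma colon_prodsetl A A' B c : colon A' A c -> colon (prodset A' B) (prodset A B) c.
Proof.
move=> cA _ [l [Hl ->]]; exists [seq (c * p.1, p.2) | p <- l]; split.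
  by move=> _ /mapP[q ql ->]; have [Aq Bq] := Hl q ql; split=> //; apply: cA.
by rewrite big_map mulr_sumr; apply: eq_bigr => p _; rewrite mulrA.
Qed.

Lemma colon_prodsetr A B B' c : colon B' B c -> colon (prodset A B') (prodset A B) c.
Proof. by rewrite ![prodset A _]prodsetC; apply: colon_prodsetl. Qed.

Lemma prodset_module D A B : is_Dmodule D A -> is_Dmodule D (prodset A B).
Proof.
case=> _ _ Amul; split; [exact: prodset0 | exact: prodsetD |].
by move=> d x Dd; apply: colon_prodsetl => a; apply: Amul.
Qed.

Lemma prodset_span D s1 s2 : is_subsemiring D ->
  prodset (span D s1) (span D s2) = span D [seq a * b | a <- s1, b <- s2].
Proof.
move=> HD; have HL := span_module [seq a * b | a <- s1, b <- s2] HD.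
have [L0 Ladd _] := HL.
apply/seteqP; split.
  apply: prodset_sub => // x y S1x S2y; rewrite mulrC.
  apply: (colon_span HL) S1x => a ai; rewrite mulrC.
  apply: (colon_span HL) S2y => b bi;
  by apply: mem_span => //; exact: (allpairs_f (fun x y : K => x * y)).
apply: span_sub; first exact/prodset_module/span_module.
move=> _ /allpairsP[[a b] /= [ai bi ->]].
by apply: prodset_mem; apply: mem_span.
Qed.

End Submodules.

Lemma linked_top_of_colon_sub (K : fieldType) (D T : set K) (star : set K -> set K) :
  is_subsemiring D -> is_subsemiring T -> D `<=` T ->
  (forall F, fD D F -> F `<=` D -> star F = star D -> colon T F `<=` T) ->
  linked D star T (top T).
Proof.
move=> HD HT DT colT F fF FD /(colT _ fF FD) cFT.
have [T0 T1 Tadd Tmul] := HT.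
have TD := subsemiring_module HT DT.
have TT := subsemiring_module HT (@subset_refl _ T).
case: fF => [[_ Fnz] [s Fs]]; subst F.
have FT_T : prodset (span D s) T `<=` T.
  by apply: prodset_sub => // a b /FD /DT; apply: Tmul.
apply/seteqP; split=> x [G [fG GT vx]].
  by exists G; split=> // y /GT /FT_T.
have xT : T x by rewrite -[x]mulr1; apply: vx => g /GT; rewrite mul1r.
have [a ai a0] := span_neq0 Fnz.
exists (span T s); split.
- split; last by exists s.
  by split; [exact: span_module | exists a; split; [apply: mem_span|]].
- apply: span_sub; first by rewrite prodsetC; apply: prodset_module.
  by move=> b bi; rewrite -[b]mulr1; apply: prodset_mem => //; apply: mem_span.
- move=> y cy; apply: Tmul => //; apply: cFT.
  by apply: (colon_span TD) => b bi; apply: cy; apply: mem_span.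
Qed.

Section Semistar.
Variables (K : fieldType) (D : set K) (star : set K -> set K).
Hypotheses (HD : is_subsemiring D) (Hs : semistar D star).
Implicit Types (E F M N : set K).

Lemma Fbar_star M : Fbar D M -> Fbar D (star M).
Proof. by case: Hs => H _ _ _; apply: H. Qed.

Lemma star_module M : Fbar D M -> is_Dmodule D (star M).
Proof. by case/Fbar_star. Qed.

Lemma sub_star M : Fbar D M -> M `<=` star M.
Proof. by case: Hs => _ _ _ H /H[]. Qed.

Lemma star_idem M : Fbar D M -> star (star M) = star M.
Proof. by case: Hs => _ _ _ H /H[]. Qed.

Lemma colon_star a M N : Fbar D M -> Fbar D N -> colon N M a -> colon (star N) (star M) a.
Proof.
move=> FM FN cMN m sm; have [->|a0] := eqVneq a 0.
  by rewrite mul0r; case: (star_module FN).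
case: Hs => _ star_scale star_mono _.
have : scale a (star M) (a * m) by exists m.
rewrite -star_scale //; apply: star_mono => //; first exact: Fbar_scale.
by move=> _ [e [Me ->]]; apply: cMN.
Qed.

Lemma colon_star_self x M : Fbar D M -> colon (star M) M x -> colon (star M) (star M) x.
Proof. by move=> FM cx; rewrite -{1}(star_idem FM); apply: colon_star (Fbar_star FM) cx. Qed.

(* From [w F <= M^*] one gets [D^* = F^* <= w^-1 M^*], and [1 \in D^*]. *)
Lemma colon_star_sub F M : Fbar D F -> Fbar D M -> star F = star D ->
  colon (star M) F `<=` star M.
Proof.
move=> FF FM HF w cw; have [->|w0] := eqVneq w 0; first by case: (star_module FM).
have FS : F `<=` scale w^-1 (star M).
  by move=> f Ff; exists (w * f); split; [apply: cw | rewrite mulKf].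
have : star D 1 by apply: (sub_star (Fbar_self HD)); case: HD.
case: Hs => _ star_scale star_mono _.
rewrite -HF => /(star_mono _ _ FF (Fbar_scale (invr_neq0 w0) (Fbar_star FM)) FS).
rewrite star_scale ?invr_eq0 //; last exact: Fbar_star.
rewrite star_idem // => -[e [se e1]].
by rewrite -[w]mulr1 e1 mulVKf.
Qed.

Lemma colon_star_span s z M : Fbar D M -> Fbar D (span D s) -> star (span D s) = star D ->
  (forall a, a \in s -> colon (star M) (star M) (z * a)) -> colon (star M) (star M) z.
Proof.
move=> FM FF HF cz e se; apply: (colon_star_sub FF FM HF).
by apply: (colon_span (star_module FM)) => a ai; rewrite mulrAC; apply: cz.
Qed.

End Semistar.

Section ColonUnion.
Variables (K : fieldType) (D : set K) (good : set K -> Prop) (ix : set K -> set K).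

(* [Dbracket D star] is [colon_union (fD D) star] and [cic D] is
   [colon_union (nonzero_frac_ideal D) id]. *)
Definition colon_union : set K := fun x => exists H, good H /\ colon (ix H) (ix H) x.

Definition colon_directed := forall H1 H2, good H1 -> good H2 ->
  exists2 H, good H & colon (ix H1) (ix H1) `<=` colon (ix H) (ix H) /\
                      colon (ix H2) (ix H2) `<=` colon (ix H) (ix H).

Variable H0 : set K.
Hypotheses (Hdir : colon_directed) (goodH0 : good H0)
  (Hmod : forall H, good H -> is_Dmodule D (ix H)).

Lemma sub_colon_union : D `<=` colon_union.
Proof. by move=> d Dd; exists H0; split=> //; apply: sub_colon_self (Hmod goodH0) _ _. Qed.

Lemma colon_union_subsemiring : is_subsemiring colon_union.
Proof.
have [c0 c1 _ _] := colon_subsemiring (Hmod goodH0).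
have lift (op : K -> K -> K) :
    (forall M, is_subsemiring (colon M M) -> forall x y,
       colon M M x -> colon M M y -> colon M M (op x y)) ->
    forall x y, colon_union x -> colon_union y -> colon_union (op x y).
  move=> opP x y [H1 [g1 c1x]] [H2 [g2 c2y]]; have [H gH [T1 T2]] := Hdir g1 g2.
  exists H; split=> //; apply: opP; last exact: T2.
    exact: colon_subsemiring (Hmod gH).
  exact: T1.
by split; [exists H0 | exists H0 | apply: lift => M; case | apply: lift => M; case].
Qed.

Lemma colon_union_common (s : seq K) z : (forall a, a \in s -> colon_union (z * a)) ->
  exists2 H, good H & forall a, a \in s -> colon (ix H) (ix H) (z * a).
Proof.
elim: s => [|b s IH] zs; first by exists H0.
have [H1 [g1 c1]] := zs b (mem_head _ _).
have [H2 g2 c2] := IH (fun a ai => zs a (mem_behead (s := b :: s) ai)).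
have [H gH [T1 T2]] := Hdir g1 g2.
exists H => // a; rewrite inE => /orP[/eqP -> | /c2 /T2 //]; exact: T1.
Qed.

End ColonUnion.

Section Dbracket.
Variables (K : fieldType) (D : set K) (star : set K -> set K).
Hypotheses (HD : is_subsemiring D) (Hs : semistar D star).

Lemma colon_star_prodset M N : Fbar D M -> Fbar D (prodset M N) ->
  colon (star M) (star M) `<=` colon (star (prodset M N)) (star (prodset M N)).
Proof.
move=> FM FP x cx; apply: (colon_star_self Hs FP).
have [P0 Padd Pmul] := star_module Hs FP.
apply: (prodset_sub (M := fun y => star _ (x * y))); first by rewrite mulr0.
  by move=> y y' ? ?; rewrite mulrDr; apply: Padd.
move=> a b Ma Nb; rewrite mulrA mulrC; apply: (colon_star Hs FM FP).
  by move=> m Mm; rewrite mulrC; apply: prodset_mem.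
by apply: cx; apply: (sub_star Hs FM).
Qed.

Lemma Dbracket_directed : colon_directed (fD D) star.
Proof.
move=> H1 H2 [F1 [s1 E1]] [F2 [s2 E2]]; rewrite {}E1 in F1 *; rewrite {}E2 in F2 *.
have [[m1 [M1m1 m10]] [m2 [M2m2 m20]]] := (F1.2, F2.2).
have FP : Fbar D (prodset (span D s1) (span D s2)).
  split; first by apply/prodset_module/span_module.
  by exists (m1 * m2); split; [apply: prodset_mem | apply: mulf_neq0].
exists (prodset (span D s1) (span D s2)).
  by split=> //; exists [seq a * b | a <- s1, b <- s2]; apply: prodset_span.
split; first exact: colon_star_prodset.
by rewrite prodsetC; apply: colon_star_prodset => //; rewrite prodsetC.
Qed.

Lemma colon_Dbracket_sub F : fD D F -> star F = star D ->
  colon (Dbracket D star) F `<=` Dbracket D star.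
Proof.
move=> [FF [s Fs]]; subst F => HF z cz.
have [H fH cH] := colon_union_common Dbracket_directed (fD_self HD)
  (fun a ai => cz a (mem_span HD ai)).
by exists H; split=> //; apply: (colon_star_span HD Hs fH.1 FF HF cH).
Qed.

Lemma Dbracket_t_linked : t_linked_star D star (Dbracket D star).
Proof.
have Hmod H : fD D H -> is_Dmodule D (star H) by move=> fH; apply: (star_module Hs fH.1).
apply: linked_top_of_colon_sub => //.
- exact: (colon_union_subsemiring Dbracket_directed (fD_self HD) Hmod).
- exact: (sub_colon_union (fD_self HD) Hmod).
- by move=> F fF _; apply: colon_Dbracket_sub.
Qed.

End Dbracket.

Definition nonzero_frac_ideal (K : fieldType) (D E : set K) := frac_ideal D E /\ nonzero_set E.

Lemma cicE (K : fieldType) (D : set K) : cic D = colon_union (nonzero_frac_ideal D) id.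
Proof.
apply/funext => x; apply/propext.
by split=> [[E [fE nE cE]] | [E [[fE nE] cE]]]; exists E.
Qed.

Section Cic.
Variables (K : fieldType) (D : set K).
Hypothesis HD : is_subsemiring D.

Lemma nonzero_frac_ideal_self : nonzero_frac_ideal D D.
Proof.
have [_ D1 _ _] := HD; have n1 : (1 : K) != 0 := oner_neq0 K.
split; last by exists 1.
split; first exact: subsemiring_module.
by exists 1; split=> // _ [e [De ->]]; rewrite mul1r.
Qed.

Lemma cic_directed : colon_directed (nonzero_frac_ideal D) id.
Proof.
move=> E1 E2 [[ME1 [d1 [Dd1 d10 dE1]]] [e1 [E1e1 e10]]].
move=> [[ME2 [d2 [Dd2 d20 dE2]]] [e2 [E2e2 e20]]].
have [D0 _ Dadd Dmul] := HD.
exists (prodset E1 E2); last by split=> x; [apply: colon_prodsetl | apply: colon_prodsetr].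
split; last by exists (e1 * e2); split; [apply: prodset_mem | apply: mulf_neq0].
split; first exact: prodset_module.
exists (d1 * d2); split; [exact: Dmul | exact: mulf_neq0 |].
have cE1 : colon D E1 d1 by move=> m Em; apply: dE1; exists m.
have cE2 : colon D E2 d2 by move=> m Em; apply: dE2; exists m.
move=> _ [x [Px ->]]; rewrite -mulrA.
apply: (prodset_sub (A := D) (B := D)) => //.
exact: (colon_prodsetl (B := D) cE1 (colon_prodsetr (A := E1) cE2 Px)).
Qed.

Variable star : set K -> set K.
Hypotheses (Hs : semistar D star) (Hc : nonzero_set (colon D (star D))).

Lemma frac_ideal_star E : nonzero_frac_ideal D E -> frac_ideal D (star E).
Proof.
move=> [fE nE]; have FE : Fbar D E := conj fE.1 nE.
have [c [cc c0]] := Hc; have [d [Dd d0 dE]] := fE.2.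
have [_ D1 _ Dmul] := HD.
have Dc : D c by rewrite -[c]mulr1; apply/cc/(sub_star Hs (Fbar_self HD)).
split; first exact: (star_module Hs).
exists (c * d); split; [exact: Dmul | exact: mulf_neq0 |].
move=> _ [e [se ->]]; rewrite -mulrA; apply: cc.
by apply: (colon_star Hs FE (Fbar_self HD)) => // m Em; apply: dE; exists m.
Qed.

Lemma colon_cic_sub F : fD D F -> star F = star D -> colon (cic D) F `<=` cic D.
Proof.
move=> [FF [s Fs]]; subst F => HF z; rewrite cicE => cz.
have [E gE cE] := colon_union_common cic_directed nonzero_frac_ideal_self
  (fun a ai => cz a (mem_span HD ai)).
have FE : Fbar D E := conj gE.1.1 gE.2.
exists (star E); split; first by split; [apply: frac_ideal_star | case: (Fbar_star Hs FE)].
apply: (colon_star_span HD Hs FE FF HF) => a ai.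
by apply: (colon_star_self Hs FE) => m /(cE a ai) /(sub_star Hs FE).
Qed.

Lemma cic_t_linked_star : t_linked_star D star (cic D).
Proof.
have Hmod E : nonzero_frac_ideal D E -> is_Dmodule D (id E) by case=> [[]].
apply: linked_top_of_colon_sub => //.
- by rewrite cicE; apply: (colon_union_subsemiring cic_directed nonzero_frac_ideal_self Hmod).
- by rewrite cicE; apply: (sub_colon_union nonzero_frac_ideal_self Hmod).
- by move=> F fF _; apply: colon_cic_sub.
Qed.

End Cic.

Section Vop.
Variable K : fieldType.
Implicit Types (D T E X Y : set K).

Lemma vopS T X Y : X `<=` Y -> vop T X `<=` vop T Y.
Proof. by move=> XY; apply: colonS; apply: colonS. Qed.

Lemma top_sub_vop T E : top T E `<=` vop T E.
Proof. by move=> x [G [_ GE]]; apply: vopS. Qed.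

Lemma vop_semistar D : is_subsemiring D -> semistar D (vop D).
Proof.
move=> HD; have DD := subsemiring_module HD (@subset_refl _ D).
split.
- move=> E [ME [e [Ee e0]]]; split; first exact: colon_module.
  by exists e; split=> //; apply: sub_colon_colon.
- by move=> x E x0 _; rewrite /vop colon_scale // colon_scale ?invr_eq0 // invrK.
- by move=> E F _ _; apply: vopS.
- by move=> E _; split; [apply: sub_colon_colon | rewrite /vop colon_colonK].
Qed.

Lemma vop_self_sub D : D 1 -> vop D D `<=` D.
Proof. by move=> D1 y vy; rewrite -[y]mulr1; apply: vy => d Dd; rewrite mul1r. Qed.

(* [F^t = D^t] puts [1] in [F^v], whence [D^v <= (F^v)^v = F^v]. *)
Lemma vop_eq_of_top_eq D F : is_subsemiring D -> F `<=` D -> top D F = top D D ->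
  vop D F = vop D D.
Proof.
move=> HD FD HF; have DD := subsemiring_module HD (@subset_refl _ D).
have [_ _ vFmul] := colon_module (colon D F) DD.
have vF1 : vop D F 1.
  apply: top_sub_vop; rewrite HF; exists D; split=> //; first exact: fD_self.
  by move=> f cf; rewrite mul1r -[f]mulr1; apply: cf; case: HD.
have DvF : D `<=` vop D F by move=> d Dd; rewrite -[d]mulr1; apply: vFmul.
apply/seteqP; split; first exact: vopS.
by have := vopS (T := D) DvF; rewrite /vop colon_colonK.
Qed.

Lemma linked_top_of_vop D T (star' : set K -> set K) : is_subsemiring D ->
  linked D (vop D) T star' -> linked D (top D) T star'.
Proof. by move=> HD HT F fF FD /(vop_eq_of_top_eq HD FD); apply: HT. Qed.

End Vop.

Theorem corollary3p6 (K : fieldType) (D : set K) (star : set K -> set K) :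
  domain_with_qf D -> semistar D star ->
  [/\ t_linked_star D star (Dbracket D star),
      (nonzero_set (colon D (star D)) -> t_linked_star D star (cic D)) &
      t_linked D (cic D)].
Proof.
move=> [/subring_subsemiring HD _] Hs; split.
- exact: Dbracket_t_linked.
- exact: cic_t_linked_star.
- apply: (linked_top_of_vop HD); apply: (cic_t_linked_star HD (vop_semistar HD)).
  have [_ D1 _ _] := HD; exists 1; split; last exact: oner_neq0.
  by move=> y /(vop_self_sub D1); rewrite mul1r.
Qed.
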